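(* Let $2\le n<m$, $Q=\sum_{i\in[m]}q_i\mathrm B(\sigma_i)\in\mathbb B_m^*$ with all $q_i>0$ and $0\le\sigma_1<\cdots<\sigma_m\le1/2$, and let $D=D_Q(i_2,\dots,i_n;s_2,\dots,s_n)=\sum_{j\in[n]}p_j\mathrm B(\varepsilon_j)$ be a $2n$-P$^*$-degradation of $Q$ (so $0\le\varepsilon_1<\cdots<\varepsilon_n\le1/2$). Let $2\le k\le n$. 1. If $\varepsilon_{k-1}=0$, then $k=2$, $\sigma_1=0$, $p_1=q_1$, and the splitting pattern $(i_2,s_2)$ is $(2,q_2)$ or, equivalently, $(1,0)$ (i.e. the first block consists exactly of $q_1\mathrm B(\sigma_1)$). 2. If $\varepsilon_k=1/2$, then $k=n$, $\sigma_m=1/2$, $p_n=q_m$, and the splitting pattern $(i_n,s_n)$ is $(m-1,0)$ or, equivalently, $(m,q_m)$ (i.e. the last block consists exactly of $q_m\mathrm B(\sigma_m)$). 3. Suppose $0<\varepsilon_{k-1}<\varepsilon_k<1/2$. (a) If $s_k>0$ and $\sigma_{i_k}\le\phi(\varepsilon_{k-1},\varepsilon_k)$, then the channel $D'$ obtained from $D$ by replacing $s_k$ with $0$ (all other splitting patterns unchanged) satisfies $I(D')>I(D)$. (b) If $s_k<q_{i_k}$ and $\sigma_{i_k}\ge\phi(\varepsilon_{k-1},\varepsilon_k)$, then the channel $D''$ obtained from $D$ by replacing $s_k$ with $q_{i_k}$ satisfies $I(D'')>I(D)$.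
   Context: A BIDMC $W$ has input uniform on $\{0,1\}$, discrete output alphabet $\mathcal Y$ and transition probabilities $\Pr(y\mid x)$; its LR-profile is $P_W(\varepsilon)=\Pr\big(\mathcal L_W(y)=\varepsilon/(1-\varepsilon)\big)$ with $\mathcal L_W(\hat y)=\Pr(y=\hat y\mid x=0)/\Pr(y=\hat y\mid x=1)$, and $W\cong W'$ if LR-profiles coincide; channel identities are up to $\cong$. $W'\preccurlyeq W$ if there is a channel $T$ from the output alphabet of $W$ to that of $W'$ with $\Pr(y'\mid x'=a)=\sum_{y}\Pr(y\mid x=a)T(y'\mid y)$. $\mathrm B(\varepsilon)$ is the BSC with crossover probability $\varepsilon$; $\sum_iq_iW_i$ denotes the random switching channel (use $W_i$ with probability $q_i$ independently of the input and output the index $i$ along with the output). $\mathbb B_n$ is the set of BIDMCs equivalent to $\sum_{i\in[n]}p_i\mathrm B(\varepsilon_i)$ for a probability vector $(p_i)$ and $\varepsilon_i\in[0,1]$; $\mathbb B_n^*=\mathbb B_n\setminus\mathbb B_{n-1}$. $P_\epsilon(W)=\frac12\sum_{y}\min\{\Pr(y\mid x=0),\Pr(y\mid x=1)\}$; $I(W)$ is the symmetric capacity (mutual information between uniform input and output, base-2 logarithms); for $\sum_ip_i\mathrm B(\varepsilon_i)$ it equals $1-\sum_ip_ih(\varepsilon_i)$ with $h$ the binary entropy function. For a symmetric BIDMC $Q$ and $n\ge1$, $W$ is a $2n$-P-degradation of $Q$ if $W\in\mathbb B_n$, $W\preccurlyeq Q$ and $P_\epsilon(W)=\min\{P_\epsilon(W'):W'\in\mathbb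 B_n,\ W'\preccurlyeq Q\}$. Construction of $D_Q$: put $q_0=q_{m+1}=0$. Given integers $1\le i_2<\cdots<i_n\le m$ and reals $s_j\in[0,q_{i_j}]$, set $i_1=0$, $s_1=0$, $i_{n+1}=m+1$, $s_{n+1}=0$, and for $j\in[n]$ $$p_j=s_j+(q_{i_{j+1}}-s_{j+1})+\sum_{i_j<i<i_{j+1}}q_i,\qquad p_j\varepsilon_j=s_j\sigma_{i_j}+(q_{i_{j+1}}-s_{j+1})\sigma_{i_{j+1}}+\sum_{i_j<i<i_{j+1}}q_i\sigma_i$$ (terms with weight $0$ contribute $0$). Then $D_Q(i_2,\dots,i_n;s_2,\dots,s_n)=\sum_{j\in[n]:p_j>0}p_j\mathrm B(\varepsilon_j)$; the pairs $(i_j,s_j)$ are its splitting patterns. Such a channel is a $2n$-P$^*$-degradation of $Q$ if (i) all $p_j>0$ and $0\le\varepsilon_1<\cdots<\varepsilon_n\le1/2$; (ii) it is a $2n$-P-degradation of $Q$; (iii) for every $j\in[n]$ with $i_{j+1}=i_j+1$: if $s_j=0$ then $s_{j+1}=0$, and if $s_{j+1}=q_{i_{j+1}}$ then $s_j=q_{i_j}$. For $0<\varepsilon_1<\varepsilon_2<1/2$, $\phi(\varepsilon_1,\varepsilon_2)=\ln\big((1-\varepsilon_1)/(1-\varepsilon_2)\big)\big/\ln\big(((1-\varepsilon_1)\varepsilon_2)/((1-\varepsilon_2)\varepsilon_1)\big)$. *)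

From HB Require Import structures.
From mathcomp Require Import all_boot all_order all_algebra.
From mathcomp Require Import reals exp.
Set Implicit Arguments. Unset Strict Implicit. Unset Printing Implicit Defensive.
Import Order.TTheory GRing.Theory Num.Theory.
Local Open Scope ring_scope.

(* A binary-input channel with finite output alphabet [out]:
   [tr x y] = Pr(y | x), input x : bool (false = 0, true = 1). *)
Record chan (R : realType) := Chan { out : finType; tr : bool -> out -> R }.
Arguments Chan {R} out tr.
Arguments out {R}.
Arguments tr {R}.

Section Chan.
Variable R : realType.

Definition bidmc (W : chan R) : Prop :=
  (forall x y, 0 <= tr W x y) /\ (forall x, \sum_(y : out W) tr W x y = 1).

(* LR-profile: P_W(e) = Pr(L_W(y) = e/(1-e)) under uniform input, where
   L_W(y) = W(y|0)/W(y|1) (value +oo when W(y|1)=0 < W(y|0), matching e=1).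
   The equation L_W(y) = e/(1-e) is written cross-multiplied. *)
Definition LRprofile (W : chan R) (e : R) : R :=
  \sum_(y : out W | tr W false y * (1 - e) == tr W true y * e)
     (tr W false y + tr W true y) / 2.

Definition chan_equiv (W W' : chan R) : Prop :=
  forall e, 0 <= e <= 1 -> LRprofile W e = LRprofile W' e.

Definition degraded (W' W : chan R) : Prop :=
  exists T : out W -> out W' -> R,
    (forall y y', 0 <= T y y') /\ (forall y, \sum_(y' : out W') T y y' = 1) /\
    (forall (a : bool) (y' : out W'), tr W' a y' = \sum_(y : out W) tr W a y * T y y').

(* Random switching channel \sum_{i in [n]} p_i B(e_i) (indices shifted to 'I_n);
   output is the pair (index, output of the BSC). *)
Definition mixBSC (n : nat) (p e : 'I_n -> R) : chan R :=
  Chan ('I_n * bool)%type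
    (fun x iy => p iy.1 * (if iy.2 == x then 1 - e iy.1 else e iy.1)).

Definition inB (n : nat) (W : chan R) : Prop :=
  exists p e : 'I_n -> R,
    (forall i, 0 <= p i) /\ \sum_i p i = 1 /\ (forall i, 0 <= e i <= 1) /\
    chan_equiv W (mixBSC p e).

Definition inBstar (n : nat) (W : chan R) : Prop := inB n W /\ ~ inB n.-1 W.

Definition Peps (W : chan R) : R :=
  (\sum_(y : out W) Num.min (tr W false y) (tr W true y)) / 2.

Definition log2 (x : R) : R := ln x / ln 2.

(* Symmetric capacity: mutual information between a uniform input and the
   output (base-2 logarithm, convention 0 log 0 = 0). *)
Definition Icap (W : chan R) : R :=
  \sum_(x : bool) \sum_(y : out W)
     (if tr W x y == 0 then 0
      else (tr W x y / 2) * log2 (tr W x y / ((tr W false y + tr W true y) / 2))).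

Definition Pdegradation (n : nat) (Q W : chan R) : Prop :=
  bidmc W /\ inB n W /\ degraded W Q /\
  forall W' : chan R, bidmc W' -> inB n W' -> degraded W' Q -> Peps W <= Peps W'.

(* ---- Construction of D_Q.  Everything is 1-based as in the paper:
   q, sigma : nat -> R with meaningful values at 1..m;
   idx j = i_j and s j = s_j for j = 2..n. *)

Definition qext (m : nat) (q : nat -> R) (i : nat) : R :=
  if (1 <= i <= m)%N then q i else 0.

Definition iext (m n : nat) (idx : nat -> nat) (j : nat) : nat :=
  if j == 1%N then 0%N else if j == n.+1 then m.+1 else idx j.

Definition sext (n : nat) (s : nat -> R) (j : nat) : R :=
  if (j == 1%N) || (j == n.+1) then 0 else s j.

Definition DQ_params (m n : nat) (q : nat -> R) (idx : nat -> nat) (s : nat -> R) : Prop :=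
  (1 <= idx 2)%N /\ (forall j, (2 <= j)%N -> (j < n)%N -> (idx j < idx j.+1)%N) /\
  (idx n <= m)%N /\ (forall j, (2 <= j <= n)%N -> 0 <= s j <= q (idx j)).

Definition DQ_p (m n : nat) (q : nat -> R) (idx : nat -> nat) (s : nat -> R) (j : nat) : R :=
  let i := iext m n idx in let sx := sext n s in let qx := qext m q in
  sx j + (qx (i j.+1) - sx j.+1) + \sum_((i j).+1 <= t < i j.+1) qx t.

(* p_j * eps_j (terms with weight 0 contribute 0) *)
Definition DQ_pe (m n : nat) (q sigma : nat -> R) (idx : nat -> nat) (s : nat -> R)
    (j : nat) : R :=
  let i := iext m n idx in let sx := sext n s in let qx := qext m q in
  (if sx j == 0 then 0 else sx j * sigma (i j)) +
  (if qx (i j.+1) - sx j.+1 == 0 then 0 else (qx (i j.+1) - sx j.+1) * sigma (i j.+1)) +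
  \sum_((i j).+1 <= t < i j.+1) qx t * sigma t.

(* eps_j (only meaningful when p_j > 0) *)
Definition DQ_eps (m n : nat) (q sigma : nat -> R) (idx : nat -> nat) (s : nat -> R)
    (j : nat) : R :=
  DQ_pe m n q sigma idx s j / DQ_p m n q idx s j.

Definition Qchan (m : nat) (q sigma : nat -> R) : chan R :=
  mixBSC (fun i : 'I_m => q i.+1) (fun i : 'I_m => sigma i.+1).

(* D_Q(i_2..i_n; s_2..s_n) = \sum_j p_j B(eps_j).  Components with p_j = 0
   are kept with weight 0; they never occur in a P*-degradation and contribute
   nothing to Icap. *)
Definition DQ (m n : nat) (q sigma : nat -> R) (idx : nat -> nat) (s : nat -> R) : chan R :=
  mixBSC (fun j : 'I_n => DQ_p m n q idx s j.+1)
         (fun j : 'I_n => DQ_eps m n q sigma idx s j.+1).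

Definition PstarDegradation (m n : nat) (q sigma : nat -> R) (idx : nat -> nat)
    (s : nat -> R) : Prop :=
  let p := DQ_p m n q idx s in let e := DQ_eps m n q sigma idx s in
  let i := iext m n idx in let sx := sext n s in let qx := qext m q in
  ((forall j, (1 <= j <= n)%N -> 0 < p j) /\ 0 <= e 1%N /\
   (forall j, (1 <= j)%N -> (j < n)%N -> e j < e j.+1) /\ e n <= 1 / 2) /\
  Pdegradation n (Qchan m q sigma) (DQ m n q sigma idx s) /\
  (forall j, (1 <= j <= n)%N -> i j.+1 = (i j).+1 ->
     (sx j = 0 -> sx j.+1 = 0) /\ (sx j.+1 = qx (i j.+1) -> sx j = qx (i j))).

Definition phi (e1 e2 : R) : R :=
  ln ((1 - e1) / (1 - e2)) / ln (((1 - e1) * e2) / ((1 - e2) * e1)).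

Definition s_upd (s : nat -> R) (k : nat) (v : R) : nat -> R :=
  fun j => if j == k then v else s j.

End Chan.

From HB Require Import structures.
From mathcomp Require Import all_boot all_order all_algebra.
From mathcomp Require Import reals exp.
From mathcomp Require Import ring lra zify.
Set Implicit Arguments.
Unset Strict Implicit.
Unset Printing Implicit Defensive.
Import Order.TTheory GRing.Theory Num.Theory.
Local Open Scope ring_scope.

(* Every block of a degradation D_Q is a mixture of components of Q, so its
   crossover eps_j is a weighted average of the sigma_i.  A block with eps_j = 0
   (resp. 1/2) can therefore only contain components with sigma_i = 0 (resp.
   1/2); as the sigma_i increase strictly this is the single component
   q_1 B(sigma_1) (resp. q_m B(sigma_m)), and the strict monotonicity of the
   eps_j makes it the first (resp. last) block.

   Changing s_k moves the mass s_k - v of B(sigma_{i_k}) between the adjacent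
   blocks k-1 and k.  The information p (1 - h(b/p)) of a block of mass p and
   flip mass b is a perspective of a convex function, hence lies above its
   tangent at the old crossover, with equality only there; the tangents are
   linear in the moved mass, and to first order the information changes by
   (s_k - v) (phi(eps_{k-1}, eps_k) - sigma_{i_k}) times a positive factor.
   Since eps_{k-1} <> eps_k, sigma_{i_k} differs from one of them, which makes
   the gain strict. *)

Lemma homo_ltn_between (T : Type) (r : T -> T -> Prop) (f : nat -> T) a b :
  (forall y x z, r x y -> r y z -> r x z) ->
  (forall i, (a <= i)%N -> (i < b)%N -> r (f i) (f i.+1)) ->
  forall i j, (a <= i)%N -> (i < j)%N -> (j <= b)%N -> r (f i) (f j).
Proof.
move=> r_trans f_incr i j ai ij jb.
apply: (@homo_ltn_in T [pred t | a <= t <= b]%N f r) => //=; try by apply/andP; lia.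
  by move=> x y /andP[ax _] /andP[_ yb] z /andP[xz zy]; apply/andP; lia.
by move=> t /andP[a_t _] /andP[_ Stb]; apply: f_incr.
Qed.

Lemma psumr_nat_eq0 (R : numDomainType) (F : nat -> R) a b :
  (forall t, (a <= t < b)%N -> 0 <= F t) -> \sum_(a <= t < b) F t = 0 ->
  forall t, (a <= t < b)%N -> F t = 0.
Proof.
move=> F_ge0 /eqP; rewrite big_nat_cond psumr_eq0 => [/allP F_eq0 t abt|t]; last first.
  by rewrite andbT; apply: F_ge0.
by apply/eqP; have := F_eq0 t; rewrite mem_index_iota abt /= => /(_ isT).
Qed.

Lemma sumrB_on2 (R : zmodType) n (F G : 'I_n -> R) (i0 i1 : 'I_n) : i0 != i1 ->
  (forall j, j != i0 -> j != i1 -> F j = G j) ->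
  \sum_j F j - \sum_j G j = (F i0 - G i0) + (F i1 - G i1).
Proof.
move=> i01 FG; rewrite -sumrB (bigD1 i0) //= (bigD1 i1) 1?eq_sym //= big1 ?addr0 ?addrA //.
by move=> j /andP[j0 j1]; rewrite FG ?subrr.
Qed.

Section BscInformation.
Variable R : realType.
Implicit Types a b c d e p x y z : R.

Lemma ln_lt_subr1 z : 0 < z -> z != 1 -> ln z < z - 1.
Proof.
move=> z0 z1; have lnz : ln z != 0 by rewrite ln_eq0.
by have := expR_gt1Dx lnz; rewrite lnK ?posrE //; lra.
Qed.

(* [ln (2 * x) - ln 2] rather than [ln x] matches the terms of [bsc_info]. *)
Lemma sub_lt_mul_ln_ratio x y : 0 <= x -> 0 < y -> x != y ->
  x - y < x * (ln (2 * x) - ln 2 - ln y).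
Proof.
move=> x0 y0 xy; have [->|x_neq0] := eqVneq x 0; first by rewrite mul0r; lra.
have x_gt0 : 0 < x by rewrite lt_def x_neq0.
have yx_gt0 : 0 < y / x by rewrite divr_gt0.
have -> : ln (2 * x) - ln 2 - ln y = - ln (y / x).
  by rewrite lnM ?posrE // ln_div ?posrE //; lra.
have yx_neq1 : y / x != 1 by rewrite (can2_eq (divfK x_neq0) (mulfK x_neq0)) mul1r eq_sym.
have := ln_lt_subr1 yx_gt0 yx_neq1; rewrite -(ltr_pM2l x_gt0) mulrBr mulrCA divff // mulr1.
lra.
Qed.

Lemma sub_le_mul_ln_ratio x y : 0 <= x -> 0 < y ->
  x - y <= x * (ln (2 * x) - ln 2 - ln y).
Proof.
move=> x0 y0; have [->|xy] := eqVneq x y; last exact/ltW/sub_lt_mul_ln_ratio.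
by rewrite lnM ?posrE //; lra.
Qed.

(* [ln 2] times the contribution [p (1 - h e)] of the component [p B(e)] to the
   symmetric capacity, cf. [Icap_mixBSC]. *)
Definition bsc_info p e := p * ((1 - e) * ln (2 * (1 - e)) + e * ln (2 * e)).

(* The tangent at crossover [c] of the convex map [(a, b) |-> bsc_info a (b / a)]. *)
Definition bsc_tangent c a b := a * ln 2 + b * ln c + (a - b) * ln (1 - c).

Definition bsc_loglik c sg := sg * ln c + (1 - sg) * ln (1 - c).

Lemma bsc_infoE a c : 0 < c < 1 -> bsc_info a c = bsc_tangent c a (c * a).
Proof. by move=> /andP[c0 c1]; rewrite /bsc_info /bsc_tangent !lnM ?posrE ?subr_gt0 //; ring. Qed.

Lemma bsc_tangent_shift c a b d sg :
  bsc_tangent c (a + d) (b + d * sg) = bsc_tangent c a b + d * (ln 2 + bsc_loglik c sg).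
Proof. by rewrite /bsc_tangent /bsc_loglik; ring. Qed.

Lemma bsc_tangent_lt a b c : 0 <= b <= a -> 0 < c < 1 -> b != c * a ->
  bsc_tangent c a b < bsc_info a (b / a).
Proof.
move=> /andP[b0 ba] /andP[c0 c1] bca.
have a_gt0 : 0 < a.
  rewrite lt_def (le_trans b0 ba) andbT; apply: contraNneq bca => a0.
  by move: ba b0; rewrite a0 mulr0 => ba b0; apply/eqP/le_anti/andP.
set e := b / a; have be : b = e * a by rewrite /e divfK ?gt_eqF.
have e0 : 0 <= e by rewrite divr_ge0 // ltW.
have e1 : e <= 1 by rewrite ler_pdivrMr // mul1r.
have ec : e != c by apply: contraNneq bca => ec; rewrite be ec.
have gap : bsc_info a e - bsc_tangent c a b =
    a * (e * (ln (2 * e) - ln 2 - ln c) + (1 - e) * (ln (2 * (1 - e)) - ln 2 - ln (1 - c))).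
  by rewrite /bsc_info /bsc_tangent be; ring.
have := sub_lt_mul_ln_ratio e0 c0 ec.
have := @sub_le_mul_ln_ratio (1 - e) (1 - c) ltac:(lra) ltac:(lra).
move=> ? ?; rewrite -subr_gt0 gap; apply: mulr_gt0 => //; lra.
Qed.

Lemma bsc_tangent_le a b c : 0 <= b <= a -> 0 < c < 1 ->
  bsc_tangent c a b <= bsc_info a (b / a).
Proof.
move=> ba c01; have [bca|bca] := eqVneq b (c * a); last exact/ltW/bsc_tangent_lt.
have [a0|a_neq0] := eqVneq a 0.
  by rewrite bca a0 /bsc_tangent /bsc_info !(mulr0, mul0r, subrr, add0r).
by rewrite bca mulfK // bsc_infoE.
Qed.

Lemma bsc_info_transfer a1 a2 e1 e2 d sg :
  0 < e1 < 1 -> 0 < e2 < 1 -> e1 != e2 -> d != 0 ->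
  0 <= e1 * a1 + d * sg <= a1 + d -> 0 <= e2 * a2 - d * sg <= a2 - d ->
  0 <= d * (bsc_loglik e1 sg - bsc_loglik e2 sg) ->
  bsc_info a1 e1 + bsc_info a2 e2 <
  bsc_info (a1 + d) ((e1 * a1 + d * sg) / (a1 + d)) +
  bsc_info (a2 - d) ((e2 * a2 - d * sg) / (a2 - d)).
Proof.
(* Bound both new blocks below by their tangents at [e1] and [e2]: [sg] differs
   from one of [e1], [e2], and that bound is strict. *)
move=> e1_01 e2_01 e12 d0 B1 B2 gain.
have shift1 := bsc_tangent_shift e1 a1 (e1 * a1) d sg.
have shift2 := bsc_tangent_shift e2 a2 (e2 * a2) (- d) sg; rewrite !mulNr in shift2.
have le1 := bsc_tangent_le B1 e1_01; have le2 := bsc_tangent_le B2 e2_01.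
rewrite (bsc_infoE a1 e1_01) (bsc_infoE a2 e2_01).
have moved c : sg != c -> d * (sg - c) != 0 by move=> sgc; rewrite mulf_neq0 // subr_eq0.
have [sge1|sge1] := eqVneq sg e1.
  have /moved sge2 : sg != e2 by rewrite sge1.
  have : e2 * a2 - d * sg != e2 * (a2 - d) by apply: contraNneq sge2 => ?; apply/eqP; lra.
  by move=> /(bsc_tangent_lt B2 e2_01); lra.
have : e1 * a1 + d * sg != e1 * (a1 + d) by apply: contraNneq (moved _ sge1) => ?; apply/eqP; lra.
by move=> /(bsc_tangent_lt B1 e1_01); lra.
Qed.

Lemma ln_odds_ratio_gt0 e1 e2 : 0 < e1 -> e1 < e2 -> e2 < 1 ->
  0 < ln (((1 - e1) * e2) / ((1 - e2) * e1)).
Proof.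
move=> e1_gt0 e12 e2_lt1; apply: ln_gt0.
by rewrite ltr_pdivlMr ?mul1r; nra.
Qed.

Lemma bsc_loglik_subE e1 e2 sg : 0 < e1 -> e1 < e2 -> e2 < 1 ->
  bsc_loglik e1 sg - bsc_loglik e2 sg =
  (phi e1 e2 - sg) * ln (((1 - e1) * e2) / ((1 - e2) * e1)).
Proof.
move=> e1_gt0 e12 e2_lt1; have L_gt0 := ln_odds_ratio_gt0 e1_gt0 e12 e2_lt1.
rewrite /phi mulrBl divfK ?gt_eqF // /bsc_loglik.
have [e1c_gt0 e2c_gt0 e2_gt0] : [/\ 0 < 1 - e1, 0 < 1 - e2 & 0 < e2] by split; lra.
by rewrite !ln_div ?posrE ?mulr_gt0 // !lnM ?posrE //; ring.
Qed.

Lemma Icap_mixBSC n (p e : 'I_n -> R) :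
  Icap (mixBSC p e) = (\sum_i bsc_info (p i) (e i)) / ln 2.
Proof.
have ln2_neq0 : ln (2 : R) != 0 by rewrite gt_eqF // ln_gt0 // ltr1n.
have termE x w a b : a + b = 1 ->
    (if x * w == 0 then 0 else x * w / 2 * log2 (x * w / ((x * a + x * b) / 2))) =
    x * w / 2 * ln (2 * w) / ln 2.
  move=> ab; have [->|xw0] := eqVneq (x * w) 0; first by rewrite !mul0r.
  have x0 : x != 0 by apply: contraNneq xw0 => ->; rewrite mul0r.
  by rewrite -mulrDr ab mulr1 /log2 mulrA; congr (_ * ln _ / _); field.
rewrite /Icap exchange_big (eq_bigr (fun ib => bsc_info (p ib.1) (e ib.1) / ln 2 / 2)).
  rewrite -(pair_bigA _ (fun i (_ : bool) => bsc_info (p i) (e i) / ln 2 / 2)) /= mulr_suml.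
  by apply: eq_bigr => i _; rewrite big_bool /= -splitr.
move=> [i b] _; rewrite big_bool /=.
by case: b; rewrite /= !termE ?subrK ?addrNK // /bsc_info; field.
Qed.

Lemma Icap_mixBSC_lt2 n (p e p' e' : 'I_n -> R) (i0 i1 : 'I_n) : i0 != i1 ->
  (forall j, j != i0 -> j != i1 -> p' j = p j /\ e' j = e j) ->
  bsc_info (p i0) (e i0) + bsc_info (p i1) (e i1) <
    bsc_info (p' i0) (e' i0) + bsc_info (p' i1) (e' i1) ->
  Icap (mixBSC p e) < Icap (mixBSC p' e').
Proof.
move=> i01 same gain; rewrite !Icap_mixBSC ltr_pM2r ?invr_gt0 ?ln_gt0 ?ltr1n // -subr_gt0.
by rewrite (sumrB_on2 i01) => [|j j0 j1]; [lra | have [-> ->] := same j j0 j1].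
Qed.

End BscInformation.

Section SplittingPatterns.
Variables (R : realType) (m n : nat) (q sigma : nat -> R) (idx : nat -> nat).
Implicit Types (s : nat -> R) (v : R).

Lemma iext_mid j : (2 <= j <= n)%N -> iext m n idx j = idx j.
Proof. by move=> j2n; rewrite /iext ifN ?ifN //; apply/eqP; lia. Qed.

Lemma iext_last : (1 <= n)%N -> iext m n idx n.+1 = m.+1.
Proof. by move=> n1; rewrite /iext eqxx ifN //; apply/eqP; lia. Qed.

Lemma sext_mid s j : (2 <= j <= n)%N -> sext n s j = s j.
Proof. by move=> j2n; rewrite /sext ifN //; apply/norP; split; apply/eqP; lia. Qed.

Lemma sext_last s : sext n s n.+1 = 0.
Proof. by rewrite /sext eqxx orbT. Qed.

Lemma qext_in i : (1 <= i <= m)%N -> qext m q i = q i.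
Proof. by rewrite /qext => ->. Qed.

Lemma qext_out i : (m < i)%N -> qext m q i = 0.
Proof. by move=> mi; rewrite /qext ifN //; apply/negP => /andP[_]; lia. Qed.

Lemma DQ_peE s j : DQ_pe m n q sigma idx s j =
  sext n s j * sigma (iext m n idx j) +
  (qext m q (iext m n idx j.+1) - sext n s j.+1) * sigma (iext m n idx j.+1) +
  \sum_((iext m n idx j).+1 <= t < iext m n idx j.+1) qext m q t * sigma t.
Proof. by rewrite /DQ_pe; do 2 case: eqP => [->|_]; rewrite ?mul0r. Qed.

Lemma idx_range s : DQ_params m n q idx s -> forall j, (2 <= j <= n)%N -> (1 <= idx j <= m)%N.
Proof.
move=> [idx2_ge1 [idx_incr [idxn_le _]]] j /andP[j2 jn].
have idx_le i k : (2 <= i)%N -> (i <= k)%N -> (k <= n)%N -> (idx i <= idx k)%N.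
  move=> i2 ik kn; case: (ltngtP i k) ik => // [lt_ik _|-> //].
  by apply: (homo_ltn_between leq_trans _ i2 lt_ik kn) => t t2 tn; apply/ltnW/idx_incr.
have idx2_le : (idx 2 <= idx j)%N := idx_le 2%N j (leqnn 2) j2 jn.
have le_idxn : (idx j <= idx n)%N := idx_le j n j2 jn (leqnn n).
by rewrite (leq_trans idx2_ge1 idx2_le) (leq_trans le_idxn idxn_le).
Qed.

Hypothesis n_ge2 : (2 <= n)%N.
Hypothesis q_gt0 : forall i, (1 <= i <= m)%N -> 0 < q i.
Hypothesis sigma1_ge0 : 0 <= sigma 1%N.
Hypothesis sigma_incr : forall i, (1 <= i)%N -> (i < m)%N -> sigma i < sigma i.+1.
Hypothesis sigma_le_half : sigma m <= 1 / 2.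

Lemma sigma_lt i j : (1 <= i)%N -> (i < j)%N -> (j <= m)%N -> sigma i < sigma j.
Proof. exact: (homo_ltn_between (r := <%R) lt_trans sigma_incr). Qed.

Lemma sigma_le i j : (1 <= i)%N -> (i <= j)%N -> (j <= m)%N -> sigma i <= sigma j.
Proof. by move=> i1; rewrite leq_eqVlt => /predU1P[-> //|ij jm]; apply/ltW/sigma_lt. Qed.

Lemma sigma_range t : (1 <= t <= m)%N -> 0 <= sigma t <= 1 / 2.
Proof.
move=> /andP[t1 tm]; apply/andP; split.
  exact: le_trans sigma1_ge0 (sigma_le (leqnn 1) t1 tm).
exact: le_trans (sigma_le t1 tm (leqnn m)) sigma_le_half.
Qed.

Lemma sigma_gt0 t : (2 <= t <= m)%N -> 0 < sigma t.
Proof. by move=> /andP[t2 tm]; apply: le_lt_trans sigma1_ge0 (sigma_lt _ t2 tm). Qed.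

Lemma sigma_lt_half t : (1 <= t < m)%N -> sigma t < 1 / 2.
Proof. by move=> /andP[t1 tm]; apply: lt_le_trans sigma_le_half; apply: sigma_lt. Qed.

Lemma qext_ge0 t : 0 <= qext m q t.
Proof. by rewrite /qext; case: ifP => // /q_gt0/ltW. Qed.

Lemma mul_sigma_bound i w : 0 <= w <= qext m q i -> 0 <= w * sigma i <= w / 2.
Proof.
rewrite /qext; case: ifP => [/sigma_range/andP[s0 s_half]|_] /andP[w0 wq].
  by apply/andP; split; [rewrite mulr_ge0 | nra].
have -> : w = 0 by apply/le_anti; rewrite wq w0.
by rewrite mul0r mul0r lexx.
Qed.

Lemma qext_sigma_bound t : 0 <= qext m q t * sigma t <= qext m q t / 2.
Proof. by apply: mul_sigma_bound; rewrite qext_ge0 lexx. Qed.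

Lemma sext_bound s : DQ_params m n q idx s ->
  forall j, (1 <= j <= n.+1)%N -> 0 <= sext n s j <= qext m q (iext m n idx j).
Proof.
move=> par j /andP[j1 jn]; have [->|j_neq1] := eqVneq j 1%N; first by rewrite /= lexx.
have [->|j_neqn] := eqVneq j n.+1; first by rewrite sext_last lexx qext_ge0.
have j2n : (2 <= j <= n)%N by apply/andP; lia.
have [_ [_ [_ s_range]]] := par.
by rewrite sext_mid // iext_mid // qext_in ?s_range ?(idx_range par).
Qed.

Lemma DQ_pe_bound s : DQ_params m n q idx s ->
  forall j, (1 <= j <= n)%N -> 0 <= DQ_pe m n q sigma idx s j <= DQ_p m n q idx s j / 2.
Proof.
move=> par j /andP[j1 jn]; rewrite DQ_peE /DQ_p.
have j_range : (1 <= j <= n.+1)%N by lia.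
have j1_range : (1 <= j.+1 <= n.+1)%N by lia.
have /andP[B1 B1'] := mul_sigma_bound (sext_bound par j_range).
have /andP[s0 sq] := sext_bound par j1_range.
have /andP[B2 B2'] : 0 <= (qext m q (iext m n idx j.+1) - sext n s j.+1) *
    sigma (iext m n idx j.+1) <= (qext m q (iext m n idx j.+1) - sext n s j.+1) / 2.
  by apply: mul_sigma_bound; lra.
set S := \sum_(_ <= t < _) _ * _; set S' := \sum_(_ <= t < _) _.
have S_ge0 : 0 <= S by apply: sumr_ge0 => t _; case/andP: (qext_sigma_bound t).
have S_le : S <= S' / 2 by rewrite /S' mulr_suml; apply: ler_sum => t _; case/andP: (qext_sigma_bound t).
by apply/andP; split; lra.
Qed.

Lemma DQ_first_block s : DQ_params m n q idx s ->
  DQ_p m n q idx s 1 = q (idx 2) - s 2 + \sum_(1 <= t < idx 2) qext m q t /\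
  DQ_pe m n q sigma idx s 1 =
    (q (idx 2) - s 2) * sigma (idx 2) + \sum_(1 <= t < idx 2) qext m q t * sigma t.
Proof.
move=> par; have two : (2 <= 2 <= n)%N by rewrite leqnn n_ge2.
rewrite DQ_peE /DQ_p (iext_mid two) (sext_mid s two) (qext_in (idx_range par two)).
by rewrite [sext n s 1]/sext [iext m n idx 1]/iext /= mul0r !add0r.
Qed.

Lemma DQ_first_block_terms_eq0 s : DQ_params m n q idx s -> DQ_pe m n q sigma idx s 1 = 0 ->
  (q (idx 2) - s 2) * sigma (idx 2) = 0 /\
  forall t, (1 <= t < idx 2)%N -> qext m q t * sigma t = 0.
Proof.
move=> par; have two : (2 <= 2 <= n)%N by rewrite leqnn n_ge2.
have [_ ->] := DQ_first_block par.
have [_ [_ [_ /(_ 2%N two)/andP[s2_ge0 s2_le]]]] := par.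
have /andP[sig2_ge0 _] := sigma_range (idx_range par two).
have head_ge0 : 0 <= (q (idx 2) - s 2) * sigma (idx 2) by rewrite mulr_ge0 // subr_ge0.
have tail_ge0 t : (1 <= t < idx 2)%N -> 0 <= qext m q t * sigma t.
  by move=> _; case/andP: (qext_sigma_bound t).
have tail_sum_ge0 : 0 <= \sum_(1 <= t < idx 2) qext m q t * sigma t.
  by rewrite big_nat_cond sumr_ge0 // => t; rewrite andbT; apply: tail_ge0.
by move=> pe1_eq0; split; [lra | apply: psumr_nat_eq0 tail_ge0 _; lra].
Qed.

Lemma DQ_first_block_noiseless s : DQ_params m n q idx s -> (idx 2 = 1%N -> s 2 = 0) ->
  0 < DQ_p m n q idx s 1 -> DQ_eps m n q sigma idx s 1 = 0 ->
  sigma 1%N = 0 /\ DQ_p m n q idx s 1 = q 1%N /\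
  ((idx 2 = 2%N /\ s 2 = q 2%N) \/ (idx 2 = 1%N /\ s 2 = 0)).
Proof.
move=> par split1 p1_gt0 eps1_eq0; have two : (2 <= 2 <= n)%N by rewrite leqnn n_ge2.
have /andP[idx2_ge1 idx2_le] := idx_range par two.
have idx2_cases : [\/ idx 2 = 1%N, idx 2 = 2%N | (3 <= idx 2)%N].
  by case: (idx 2) idx2_ge1 => [|[|[|i]]]; [| constructor 1 | constructor 2 | constructor 3].
have [head_eq0 tail_eq0] : (q (idx 2) - s 2) * sigma (idx 2) = 0 /\
    forall t, (1 <= t < idx 2)%N -> qext m q t * sigma t = 0.
  apply: DQ_first_block_terms_eq0 => //; move: eps1_eq0; rewrite /DQ_eps => /eqP.
  by rewrite mulf_eq0 invr_eq0 (gt_eqF p1_gt0) orbF => /eqP.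
rewrite (DQ_first_block par).1.
have q_sigma_eq0 t : (1 <= t <= m)%N -> q t * sigma t = 0 -> sigma t = 0.
  by move=> /q_gt0 qt_gt0 /eqP; rewrite mulf_eq0 gt_eqF //= => /eqP.
have q1_sigma1_eq0 : q 1%N * sigma 1%N = 0 -> sigma 1%N = 0.
  by apply: q_sigma_eq0; rewrite /= (leq_trans idx2_ge1 idx2_le).
case: idx2_cases => [idx2_eq1|idx2_eq2|idx2_ge3].
- move: head_eq0; rewrite idx2_eq1 (split1 idx2_eq1) big_geq // !subr0 addr0.
  by split; [exact: q1_sigma1_eq0 | split=> //; right].
- have m_ge2 : (2 <= m)%N by rewrite -idx2_eq2.
  have sigma1_eq0 : sigma 1%N = 0.
    by apply: q1_sigma1_eq0; move: (tail_eq0 1%N); rewrite idx2_eq2 qext_in ?(ltnW m_ge2) //; apply.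
  have sigma2_gt0 : 0 < sigma 2%N by apply: sigma_gt0; rewrite leqnn.
  have s2_eq : s 2 = q 2%N.
    move: head_eq0; rewrite idx2_eq2 => /eqP.
    by rewrite mulf_eq0 (gt_eqF sigma2_gt0) orbF subr_eq0 => /eqP.
  rewrite idx2_eq2 s2_eq subrr add0r big_nat1 qext_in ?(ltnW m_ge2) //.
  by split=> //; split=> //; left.
- have two_m : (2 <= 2 <= m)%N by rewrite leqnn (leq_trans (ltnW idx2_ge3) idx2_le).
  have : 0 < q 2%N * sigma 2%N by rewrite mulr_gt0 ?q_gt0 ?sigma_gt0 //; case/andP: two_m.
  by rewrite -(qext_in (i := 2)) ?tail_eq0 ?ltxx //; case/andP: two_m.
Qed.

Lemma DQ_last_block s : DQ_params m n q idx s ->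
  DQ_p m n q idx s n = s n + \sum_((idx n).+1 <= t < m.+1) qext m q t /\
  DQ_pe m n q sigma idx s n =
    s n * sigma (idx n) + \sum_((idx n).+1 <= t < m.+1) qext m q t * sigma t.
Proof.
move=> par; have nn : (2 <= n <= n)%N by rewrite leqnn n_ge2.
rewrite DQ_peE /DQ_p (iext_mid nn) (sext_mid s nn) iext_last ?sext_last ?qext_out //; last lia.
by rewrite subrr mul0r !addr0.
Qed.

Lemma DQ_last_block_terms_eq0 s : DQ_params m n q idx s ->
  DQ_pe m n q sigma idx s n = DQ_p m n q idx s n / 2 ->
  s n * (1 / 2 - sigma (idx n)) = 0 /\
  forall t, ((idx n).+1 <= t < m.+1)%N -> qext m q t * (1 / 2 - sigma t) = 0.
Proof.
move=> par; have nn : (2 <= n <= n)%N by rewrite leqnn n_ge2.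
have [-> ->] := DQ_last_block par.
have [_ [_ [_ /(_ n nn)/andP[sn_ge0 sn_le]]]] := par.
have /andP[_ sign_le] := sigma_range (idx_range par nn).
have head_ge0 : 0 <= s n * (1 / 2 - sigma (idx n)) by rewrite mulr_ge0 // subr_ge0.
have tail_ge0 t : ((idx n).+1 <= t < m.+1)%N -> 0 <= qext m q t * (1 / 2 - sigma t).
  by move=> _; case/andP: (qext_sigma_bound t) => _ ?; lra.
have tail_sum_ge0 : 0 <= \sum_((idx n).+1 <= t < m.+1) qext m q t * (1 / 2 - sigma t).
  by rewrite big_nat_cond sumr_ge0 // => t; rewrite andbT; apply: tail_ge0.
have tail_sumE : \sum_((idx n).+1 <= t < m.+1) qext m q t * (1 / 2 - sigma t) =
    (\sum_((idx n).+1 <= t < m.+1) qext m q t) / 2 -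
    \sum_((idx n).+1 <= t < m.+1) qext m q t * sigma t.
  by rewrite mulr_suml -sumrB; apply: eq_bigr => t _; ring.
by move=> pe_half; split; [lra | apply: psumr_nat_eq0 tail_ge0 _; lra].
Qed.

Lemma DQ_last_block_useless s : DQ_params m n q idx s -> (idx n = m -> s n = q m) ->
  0 < DQ_p m n q idx s n -> DQ_eps m n q sigma idx s n = 1 / 2 ->
  sigma m = 1 / 2 /\ DQ_p m n q idx s n = q m /\
  ((idx n = m.-1 /\ s n = 0) \/ (idx n = m /\ s n = q m)).
Proof.
move=> par splitn pn_gt0 eps_half; have nn : (2 <= n <= n)%N by rewrite leqnn n_ge2.
have /andP[idxn_ge1 idxn_le] := idx_range par nn.
have idxn_cases : idx n = m \/ (idx n).+1 = m \/ ((idx n).+2 <= m)%N by lia.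
have [head_eq0 tail_eq0] : s n * (1 / 2 - sigma (idx n)) = 0 /\
    forall t, ((idx n).+1 <= t < m.+1)%N -> qext m q t * (1 / 2 - sigma t) = 0.
  apply: DQ_last_block_terms_eq0 => //; move: eps_half; rewrite /DQ_eps.
  by move=> /(canRL (divfK (lt0r_neq0 pn_gt0))) ->; lra.
rewrite (DQ_last_block par).1.
have half_sigma t : (1 <= t <= m)%N -> q t * (1 / 2 - sigma t) = 0 -> sigma t = 1 / 2.
  by move=> /q_gt0 qt_gt0 /eqP; rewrite mulf_eq0 gt_eqF //= subr_eq0 => /eqP <-.
have m_range : (1 <= m <= m)%N by rewrite leqnn (leq_trans idxn_ge1 idxn_le).
case: idxn_cases => [idxn_eq|[idxn_eq|idxn_lt]].
- have sn_eq := splitn idxn_eq; rewrite idxn_eq sn_eq in head_eq0.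
  have sigma_m : sigma m = 1 / 2 by apply: half_sigma.
  by rewrite idxn_eq big_geq // addr0; split=> //; split=> //; right.
- have sigma_m : sigma m = 1 / 2.
    by apply: half_sigma; rewrite // -(qext_in m_range) tail_eq0 // -idxn_eq leqnn ltnSn.
  have sn_eq0 : s n = 0.
    have : sigma (idx n) < 1 / 2 by apply: sigma_lt_half; rewrite idxn_ge1 -idxn_eq ltnSn.
    by move: head_eq0 => /eqP; rewrite mulf_eq0 => /orP[/eqP //|/eqP]; lra.
  rewrite idxn_eq big_nat1 qext_in // sn_eq0 add0r.
  by split=> //; split=> //; left; rewrite -idxn_eq.
- have t_range : (1 <= (idx n).+1 < m)%N by [].
  have t_m : (1 <= (idx n).+1 <= m)%N by exact: ltnW.
  have t_tail : ((idx n).+1 <= (idx n).+1 < m.+1)%N by rewrite leqnn ltnS ltnW.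
  have := sigma_lt_half t_range.
  by rewrite half_sigma ?ltxx // -(qext_in t_m) tail_eq0.
Qed.

Lemma DQ_params_upd s k v : (2 <= k <= n)%N -> 0 <= v <= q (idx k) ->
  DQ_params m n q idx s -> DQ_params m n q idx (s_upd s k v).
Proof.
move=> k_range v_range [idx2 [idx_incr [idxn s_range]]]; do 3 split=> //.
by move=> j j_range; rewrite /s_upd; case: eqP => [->|_]; [exact: v_range | exact: s_range].
Qed.

Lemma sext_upd s k v j : (2 <= k <= n)%N ->
  sext n (s_upd s k v) j = if j == k then v else sext n s j.
Proof.
move=> k_range; have [->|jk] := eqVneq j k; last by rewrite /sext /s_upd (negbTE jk).
by rewrite (sext_mid _ k_range) /s_upd eqxx.
Qed.

Lemma DQ_p_upd s k v j : (2 <= k <= n)%N ->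
  DQ_p m n q idx (s_upd s k v) j = DQ_p m n q idx s j +
    (if j.+1 == k then s k - v else 0) + (if j == k then v - s k else 0).
Proof.
move=> k_range; rewrite /DQ_p !(sext_upd _ _ _ k_range) -(sext_mid s k_range).
by case: eqVneq => [<-|_]; case: eqVneq => [->|_]; rewrite ?eqxx ?(gtn_eqF (ltnSn _)); ring.
Qed.

Lemma DQ_pe_upd s k v j : (2 <= k <= n)%N ->
  DQ_pe m n q sigma idx (s_upd s k v) j = DQ_pe m n q sigma idx s j +
    (if j.+1 == k then (s k - v) * sigma (idx k) else 0) +
    (if j == k then (v - s k) * sigma (idx k) else 0).
Proof.
move=> k_range; rewrite !DQ_peE !(sext_upd _ _ _ k_range) -(sext_mid s k_range).
rewrite -(iext_mid k_range).
by case: eqVneq => [<-|_]; case: eqVneq => [->|_]; rewrite ?eqxx ?(gtn_eqF (ltnSn _)); ring.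
Qed.

Lemma DQ_upd_blocks s k v : (2 <= k <= n)%N ->
  [/\ DQ_p m n q idx (s_upd s k v) k.-1 = DQ_p m n q idx s k.-1 + (s k - v),
      DQ_p m n q idx (s_upd s k v) k = DQ_p m n q idx s k - (s k - v),
      DQ_pe m n q sigma idx (s_upd s k v) k.-1 =
        DQ_pe m n q sigma idx s k.-1 + (s k - v) * sigma (idx k) &
      DQ_pe m n q sigma idx (s_upd s k v) k =
        DQ_pe m n q sigma idx s k - (s k - v) * sigma (idx k)].
Proof.
move=> k_range; have [kk1 k1_neq k_neq] : [/\ k.-1.+1 = k, k.-1 != k & k.+1 != k].
  by split; try apply/eqP; lia.
rewrite !DQ_p_upd ?DQ_pe_upd // kk1 eqxx (negbTE k1_neq) (negbTE k_neq) !addr0.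
by split=> //; ring.
Qed.

Lemma Icap_DQ_upd_gt s k v : DQ_params m n q idx s -> (2 <= k <= n)%N ->
  0 <= v <= q (idx k) -> s k != v ->
  0 < DQ_p m n q idx s k.-1 -> 0 < DQ_p m n q idx s k ->
  let e1 := DQ_eps m n q sigma idx s k.-1 in let e2 := DQ_eps m n q sigma idx s k in
  0 < e1 -> e1 < e2 -> e2 < 1 -> 0 <= (s k - v) * (phi e1 e2 - sigma (idx k)) ->
  Icap (DQ m n q sigma idx s) < Icap (DQ m n q sigma idx (s_upd s k v)).
Proof.
move=> par k_range; have [k1_range k_range'] : (1 <= k.-1 <= n)%N /\ (1 <= k <= n)%N by lia.
have [i0 i1 kk1 kk2 i01] : [/\ (k.-2 < n)%N, (k.-1 < n)%N, k.-1.+1 = k, k.-2.+1 = k.-1 &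
  k.-2 != k.-1] by split; try apply/eqP; lia.
have off_k j : j != k.-2 -> j != k.-1 -> (j.+2 != k) && (j.+1 != k).
  by move=> /eqP ? /eqP ?; apply/andP; split; apply/eqP; lia.
move=> v_range skv a1_gt0 a2_gt0 e1 e2 e1_gt0 e12 e2_lt1 gain.
(* Block [j] of [DQ] is the component with ordinal index [j.-1]. *)
apply: (Icap_mixBSC_lt2 (i0 := Ordinal i0) (i1 := Ordinal i1)) => /=; first by rewrite -val_eqE.
  move=> j; rewrite -!val_eqE /= => j0 j1; have /andP[jk1 jk] := off_k j j0 j1.
  by rewrite /DQ_eps DQ_p_upd // DQ_pe_upd // (negbTE jk1) (negbTE jk) !addr0.
have [p1E p2E pe1E pe2E] := DQ_upd_blocks s v k_range.
have pe1 : DQ_pe m n q sigma idx s k.-1 = e1 * DQ_p m n q idx s k.-1 by rewrite divfK ?gt_eqF.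
have pe2 : DQ_pe m n q sigma idx s k = e2 * DQ_p m n q idx s k by rewrite divfK ?gt_eqF.
have par' := DQ_params_upd k_range v_range par.
have /andP[] := DQ_pe_bound par' k1_range; rewrite p1E pe1E pe1 => B1lo B1hi.
have /andP[] := DQ_pe_bound par' k_range'; rewrite p2E pe2E pe2 => B2lo B2hi.
rewrite kk2 kk1 -/e1 -/e2 /DQ_eps p1E p2E pe1E pe2E pe1 pe2.
apply: bsc_info_transfer.
- by apply/andP; split; lra.
- by apply/andP; split; lra.
- by rewrite lt_eqF.
- by rewrite subr_eq0.
- by apply/andP; split; lra.
- by apply/andP; split; lra.
- by rewrite bsc_loglik_subE // mulrA mulr_ge0 // ltW // ln_odds_ratio_gt0.
Qed.

Lemma PstarDegradation_eps_gt0 s j : PstarDegradation m n q sigma idx s ->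
  (2 <= j <= n)%N -> 0 < DQ_eps m n q sigma idx s j.
Proof.
move=> [[_ [eps1_ge0 [eps_incr _]]] _] /andP[j2 jn].
exact: le_lt_trans eps1_ge0 (homo_ltn_between (r := <%R) lt_trans eps_incr (leqnn 1) j2 jn).
Qed.

Lemma PstarDegradation_eps_lt_half s j : PstarDegradation m n q sigma idx s ->
  (1 <= j < n)%N -> DQ_eps m n q sigma idx s j < 1 / 2.
Proof.
move=> [[_ [_ [eps_incr epsn_le]]] _] /andP[j1 jn].
exact: lt_le_trans (homo_ltn_between (r := <%R) lt_trans eps_incr j1 jn (leqnn n)) epsn_le.
Qed.

Lemma PstarDegradation_first_split s : PstarDegradation m n q sigma idx s ->
  idx 2 = 1%N -> s 2 = 0.
Proof.
move=> [_ [_ adjacent]] idx2_eq1; have two : (2 <= 2 <= n)%N by rewrite leqnn n_ge2.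
have := adjacent 1%N (ltnW n_ge2); rewrite (iext_mid two) (sext_mid s two) idx2_eq1.
by case=> // + _; apply.
Qed.

Lemma PstarDegradation_last_split s : DQ_params m n q idx s -> PstarDegradation m n q sigma idx s ->
  idx n = m -> s n = q m.
Proof.
move=> par [_ [_ adjacent]] idxn_eq; have nn : (2 <= n <= n)%N by rewrite leqnn n_ge2.
have n_range : (1 <= n <= n)%N by rewrite leqnn ltnW.
have m_range : (1 <= m <= m)%N by rewrite leqnn andbT -idxn_eq; case/andP: (idx_range par nn).
have := adjacent n n_range; rewrite (iext_mid nn) (sext_mid s nn) (iext_last (ltnW n_ge2)).
by rewrite sext_last qext_out // idxn_eq qext_in //; case=> // _; apply.
Qed.

End SplittingPatterns.

Theorem lemma8 (R : realType) (m n : nat) (q sigma : nat -> R)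
    (idx : nat -> nat) (s : nat -> R) (k : nat) :
  (2 <= n)%N -> (n < m)%N ->
  (forall i, (1 <= i <= m)%N -> 0 < q i) ->
  \sum_(i < m) q i.+1 = 1 ->
  0 <= sigma 1%N -> (forall i, (1 <= i)%N -> (i < m)%N -> sigma i < sigma i.+1) ->
  sigma m <= 1 / 2 ->
  inBstar m (Qchan m q sigma) ->
  DQ_params m n q idx s ->
  PstarDegradation m n q sigma idx s ->
  (2 <= k <= n)%N ->
  let p := DQ_p m n q idx s in
  let eps := DQ_eps m n q sigma idx s in
  (eps k.-1 = 0 ->
     k = 2%N /\ sigma 1%N = 0 /\ p 1%N = q 1%N /\
     ((idx 2%N = 2%N /\ s 2%N = q 2%N) \/ (idx 2%N = 1%N /\ s 2%N = 0))) /\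
  (eps k = 1 / 2 ->
     k = n /\ sigma m = 1 / 2 /\ p n = q m /\
     ((idx n = m.-1 /\ s n = 0) \/ (idx n = m /\ s n = q m))) /\
  (0 < eps k.-1 -> eps k.-1 < eps k -> eps k < 1 / 2 ->
     (0 < s k -> sigma (idx k) <= phi (eps k.-1) (eps k) ->
        Icap (DQ m n q sigma idx (s_upd s k 0)) > Icap (DQ m n q sigma idx s)) /\
     (s k < q (idx k) -> sigma (idx k) >= phi (eps k.-1) (eps k) ->
        Icap (DQ m n q sigma idx (s_upd s k (q (idx k)))) > Icap (DQ m n q sigma idx s))).
Proof.
move=> n_ge2 _ q_gt0 _ sigma1_ge0 sigma_incr sigma_le_half _ par PS k_range p eps.
rewrite {}/p {}/eps; have [k1_range k_range'] : (1 <= k.-1 <= n)%N /\ (1 <= k <= n)%N by lia.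
have p_gt0 : forall j, (1 <= j <= n)%N -> 0 < DQ_p m n q idx s j by case: PS => [[]].
split; [|split].
- move=> eps_k1_eq0; have k_eq2 : k = 2%N.
    case: (ltngtP k 2) k_range => [|k_gt2 _|//]; first by lia.
    by have := PstarDegradation_eps_gt0 PS (_ : (2 <= k.-1 <= n)%N); rewrite eps_k1_eq0 ltxx; lia.
  subst k; split=> //; apply: DQ_first_block_noiseless => //; last exact: p_gt0.
  exact: PstarDegradation_first_split PS.
- move=> eps_k_half; have k_eqn : k = n.
    case: (ltngtP k n) k_range => [k_lt_n _||//]; last by lia.
    by have := PstarDegradation_eps_lt_half PS (_ : (1 <= k < n)%N); rewrite eps_k_half ltxx; lia.
  subst k; split=> //; apply: DQ_last_block_useless => //; last exact: p_gt0.
  exact: PstarDegradation_last_split PS.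
move=> eps1_gt0 eps12 eps2_lt; have eps2_lt1 : DQ_eps m n q sigma idx s k < 1 by lra.
have [p1_gt0 p2_gt0] := (p_gt0 _ k1_range, p_gt0 _ k_range').
have q_idx_gt0 : 0 < q (idx k) by apply/q_gt0/(idx_range par).
split=> [sk_gt0 sigma_le | sk_lt sigma_ge]; apply: Icap_DQ_upd_gt => //.
- by rewrite lexx ltW.
- by rewrite gt_eqF.
- by rewrite subr0 mulr_ge0 ?subr_ge0 // ltW.
- by rewrite (ltW q_idx_gt0) lexx.
- by rewrite lt_eqF.
- by rewrite mulr_le0 ?subr_le0 // ltW.
Qed.
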